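(* A set $\mathcal{K}\subseteq\wp(\mathcal{G})$ is coherent if and only if there is a proper filter $\mathfrak{D}$ on the set $\mathbf{C}$ of all coherent sets of desirable gambles — i.e. $\mathfrak{D}\subseteq\wp(\mathbf{C})$ with $\mathfrak{D}\neq\emptyset$, $\emptyset\notin\mathfrak{D}$, $\mathbb{D}_1\cap\mathbb{D}_2\in\mathfrak{D}$ whenever $\mathbb{D}_1,\mathbb{D}_2\in\mathfrak{D}$, and $\mathbb{D}_2\in\mathfrak{D}$ whenever $\mathbb{D}_1\in\mathfrak{D}$ and $\mathbb{D}_1\subseteq\mathbb{D}_2\subseteq\mathbf{C}$ — such that for all $B\subseteq\mathcal{G}$: $B\in\mathcal{K}$ iff there is $\mathbb{D}\in\mathfrak{D}$ with $B\cap D\neq\emptyset$ for all $D\in\mathbb{D}$. Moreover, for such a filter, the latter condition is equivalent to $\{D\in\mathbf{C}: B\cap D\neq\emptyset\}\in\mathfrak{D}$.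
   Context: $\Omega$ is a non-empty set and $\mathcal{G}$ is the set of bounded functions $\Omega\to\mathbb{R}$. $f\geq g$ means pointwise $\geq$; $f\gneq g$ means $f\geq g$ and $f\neq g$; $\mathcal{G}_{\gneq 0}=\{f: f\gneq 0\}$. $\mathrm{posi}(B)=\{\sum_{i=1}^m\lambda_i h_i: m\geq1,\lambda_i>0,h_i\in B\}$. A set $D\subseteq\mathcal{G}$ is coherent if $0\notin D$; $\mathcal{G}_{\gneq0}\subseteq D$; $\lambda g\in D$ whenever $g\in D,\lambda>0$; and $f+g\in D$ whenever $f,g\in D$. A set $\mathcal{K}\subseteq\wp(\mathcal{G})$ is coherent if: (K$_\emptyset$) $\emptyset\notin\mathcal{K}$; (K$_0$) if $A\in\mathcal{K}$ then $A\setminus\{0\}\in\mathcal{K}$; (K$_{\gneq0}$) if $g\in\mathcal{G}_{\gneq0}$ then $\{g\}\in\mathcal{K}$; (K$_\supseteq$) if $A\in\mathcal{K}$ and $B\supseteq A$ then $B\in\mathcal{K}$; (K$_{\mathrm{Dom}}$) if $A\in\mathcal{K}$ and for each $g\in A$, $f_g$ is a gamble with $f_g\geq g$, then $\{f_g: g\in A\}\in\mathcal{K}$; (K$_{\mathrm{Add}}$) if $A_1,\ldots,A_n\in\mathcal{K}$ (finitely many) and for each $\langle g_1,\ldots,g_n\rangle\in A_1\times\cdots\times A_n$, $f_{\langle g_1,\ldots,g_n\rangle}$ is some member of $\mathrm{posi}(\{g_1,\ldots,g_n\})$, then $\{f_{\langle g_1,\ldots,g_n\rangle}:\langle g_1,\ldots,g_n\rangle\in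 A_1\times\cdots\times A_n\}\in\mathcal{K}$. *)

From Stdlib Require Import Reals Lra List.
Open Scope R_scope.
Set Implicit Arguments.

Section Gambles.
Variable Omega : Type.

Definition bounded (f : Omega -> R) : Prop :=
  exists M : R, forall w, Rabs (f w) <= M.

Definition gamble : Type := { f : Omega -> R | bounded f }.

Definition gval (g : gamble) : Omega -> R := proj1_sig g.

Lemma bounded0 : bounded (fun _ => 0).
Proof. exists 0; intro w; rewrite Rabs_R0; lra. Qed.

Definition gzero : gamble := exist _ (fun _ => 0) bounded0.

Lemma boundedD (f g : gamble) : bounded (fun w => gval f w + gval g w).
Proof.
  destruct f as [f [M1 H1]], g as [g [M2 H2]]; simpl.
  exists (M1 + M2); intro w.
  eapply Rle_trans; [apply Rabs_triang|]. specialize (H1 w); specialize (H2 w); lra.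
Qed.

Definition gadd (f g : gamble) : gamble := exist _ _ (boundedD f g).

Lemma boundedZ (l : R) (g : gamble) : bounded (fun w => l * gval g w).
Proof.
  destruct g as [g [M H]]; simpl.
  exists (Rabs l * M); intro w. rewrite Rabs_mult.
  apply Rmult_le_compat_l; [apply Rabs_pos | apply H].
Qed.

Definition gscale (l : R) (g : gamble) : gamble := exist _ _ (boundedZ l g).

Definition gle (f g : gamble) : Prop := forall w, gval f w <= gval g w.

Definition gpos (f : gamble) : Prop := gle gzero f /\ f <> gzero.

Definition gset : Type := gamble -> Prop.

Definition posi (B : gset) (f : gamble) : Prop :=
  exists (m : nat) (lam : nat -> R) (h : nat -> gamble),
    (1 <= m)%nat /\
    (forall i, (i < m)%nat -> 0 < lam i /\ B (h i)) /\
    forall w, gval f w = sum_f_R0 (fun i => lam i * gval (h i) w) (m - 1).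

Definition coherentD (D : gset) : Prop :=
  ~ D gzero /\
  (forall g, gpos g -> D g) /\
  (forall g l, D g -> 0 < l -> D (gscale l g)) /\
  (forall f g, D f -> D g -> D (gadd f g)).

Definition coherentK (K : gset -> Prop) : Prop :=
  ~ K (fun _ => False) /\
  (forall A, K A -> K (fun g => A g /\ g <> gzero)) /\
  (forall g, gpos g -> K (fun h => h = g)) /\
  (forall A B : gset, K A -> (forall g, A g -> B g) -> K B) /\
  (forall (A : gset) (f : gamble -> gamble),
      K A -> (forall g, A g -> gle g (f g)) ->
      K (fun h => exists g, A g /\ h = f g)) /\
  (* K_Add: As = [A_1; ...; A_n]; tuples <g_1,...,g_n> are lists gs with
     g_i in A_i; F selects for each tuple a member of posi({g_1,...,g_n}) *)
  (forall (As : list gset) (F : list gamble -> gamble),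
      Forall K As ->
      (forall gs, Forall2 (fun (A : gset) g => A g) As gs ->
                  posi (fun h => In h gs) (F gs)) ->
      K (fun h => exists gs, Forall2 (fun (A : gset) g => A g) As gs /\ h = F gs)).

Definition proper_filter (F : (gset -> Prop) -> Prop) : Prop :=
  (forall DD, F DD -> forall D, DD D -> coherentD D) /\
  (exists DD, F DD) /\
  ~ F (fun _ => False) /\
  (forall DD1 DD2, F DD1 -> F DD2 -> F (fun D => DD1 D /\ DD2 D)) /\
  (forall DD1 DD2 : gset -> Prop, F DD1 ->
      (forall D, DD1 D -> DD2 D) -> (forall D, DD2 D -> coherentD D) -> F DD2).

Definition filter_rep (F : (gset -> Prop) -> Prop) (B : gset) : Prop :=
  exists DD, F DD /\ forall D, DD D -> exists g, B g /\ D g.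

End Gambles.

(* A coherent K is determined by the filter it generates on the coherent
   sets of desirable gambles, namely by the sets of such D meeting every member of
   some finite family B_1, ..., B_n of K.  The substantial step is the converse:
   if every coherent D meeting B_1, ..., B_n also meets B, then B is in K.  For each
   choice g_i in B_i, the natural extension of {g_1, ..., g_n} either contains 0,
   giving a combination c <= 0, or it is coherent and hence meets B, giving a
   combination c dominated by some b in B.  Axiom K_Add collects these c into a
   member of K, and K_Dom, K_0 and K_supseteq turn it into B. *)

From Stdlib Require Import Reals List Lra Lia.
From Stdlib Require Import ProofIrrelevance FunctionalExtensionality PropExtensionality.
From Stdlib Require Import ClassicalEpsilon.
Open Scope R_scope.
Set Implicit Arguments.

Section Gambles.
Variable Om : Type.

Implicit Types (f g c : gamble Om) (E A B D : gset Om).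

Definition meets A D : Prop := exists g, A g /\ D g.

Definition meeting_set B (D : gset Om) : Prop := coherentD D /\ meets B D.

Definition tuple_of (As : list (gset Om)) (gs : list (gamble Om)) : Prop :=
  Forall2 (fun (A : gset Om) g => A g) As gs.

Lemma gamble_ext f g : (forall w, gval f w = gval g w) -> f = g.
Proof.
  destruct f as [f bf], g as [g bg]; simpl; intro Efg.
  apply subset_eq_compat, functional_extensionality; exact Efg.
Qed.

Lemma gposE g : gpos g <-> gle (gzero Om) g /\ exists w, 0 < gval g w.
Proof.
  split.
  - intros [Hge Hne]; split; [exact Hge|].
    apply NNPP; intro Hnpos; apply Hne, gamble_ext; intro w.
    specialize (Hge w); simpl in *.
    destruct (Rle_lt_or_eq_dec _ _ Hge) as [Hlt|]; [exfalso; eauto|auto].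
  - intros [Hge [w Hw]]; split; [exact Hge|].
    intro Hg0; rewrite Hg0 in Hw; simpl in Hw; lra.
Qed.

Lemma gpos_gzero : ~ gpos (gzero Om).
Proof. intros [_ Hne]; exact (Hne eq_refl). Qed.

Lemma posi_mem E g : E g -> posi E g.
Proof.
  intro Hg; exists 1%nat, (fun _ => 1), (fun _ => g); split; [lia|split].
  - intros; split; [lra|exact Hg].
  - intro w; simpl; ring.
Qed.

Lemma posiZ E g l : posi E g -> 0 < l -> posi E (gscale l g).
Proof.
  intros [m [lam [h [Hm [Hlam Hg]]]]] Hl.
  exists m, (fun i => l * lam i), h; split; [exact Hm|split].
  - intros i Hi; destruct (Hlam i Hi); split; [apply Rmult_lt_0_compat|]; auto.
  - intro w; simpl; rewrite Hg, scal_sum; apply sum_eq; intros; ring.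
Qed.

Lemma posiD E f g : posi E f -> posi E g -> posi E (gadd f g).
Proof.
  intros [m1 [l1 [h1 [Hm1 [Hl1 Hf]]]]] [m2 [l2 [h2 [Hm2 [Hl2 Hg]]]]].
  exists (m1 + m2)%nat,
    (fun i => if Nat.ltb i m1 then l1 i else l2 (i - m1)%nat),
    (fun i => if Nat.ltb i m1 then h1 i else h2 (i - m1)%nat).
  split; [lia|split].
  - intros i Hi; destruct (Nat.ltb i m1) eqn:Hi1.
    + apply Nat.ltb_lt in Hi1; auto.
    + apply Nat.ltb_ge in Hi1; apply Hl2; lia.
  - intro w; simpl; rewrite Hf, Hg, (tech2 _ (m1 - 1) (m1 + m2 - 1)) by lia.
    f_equal.
    + apply sum_eq; intros i Hi; destruct (Nat.ltb i m1) eqn:Hi1; [reflexivity|].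
      apply Nat.ltb_ge in Hi1; lia.
    + replace (m1 + m2 - 1 - S (m1 - 1))%nat with (m2 - 1)%nat by lia.
      apply sum_eq; intros i _.
      destruct (Nat.ltb (S (m1 - 1) + i) m1) eqn:Hi1; [apply Nat.ltb_lt in Hi1; lia|].
      now replace (S (m1 - 1) + i - m1)%nat with i by lia.
Qed.

Fixpoint lin_comb (lam : nat -> R) (h : nat -> gamble Om) (n : nat) : gamble Om :=
  match n with
  | O => gscale (lam O) (h O)
  | S n => gadd (lin_comb lam h n) (gscale (lam (S n)) (h (S n)))
  end.

Lemma lin_combE lam h n w :
  gval (lin_comb lam h n) w = sum_f_R0 (fun i => lam i * gval (h i) w) n.
Proof. induction n as [|n IH]; simpl; [reflexivity|now rewrite <- IH]. Qed.

Lemma coherentD_posi D E f :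
  coherentD D -> (forall g, E g -> D g) -> posi E f -> D f.
Proof.
  intros [_ [_ [HDZ HDD]]] HSD [m [lam [h [Hm [Hlam Hf]]]]].
  replace f with (lin_comb lam h (m - 1))
    by (apply gamble_ext; intro w; now rewrite Hf, lin_combE).
  assert (Hcomb : forall n, (n < m)%nat -> D (lin_comb lam h n)).
  { induction n as [|n IH]; intro Hn; simpl; destruct (Hlam _ Hn).
    - apply HDZ; auto.
    - apply HDD; [apply IH; lia|apply HDZ; auto]. }
  apply Hcomb; lia.
Qed.

Lemma coherentD_le D g f : coherentD D -> D g -> gle g f -> D f.
Proof.
  intros [_ [HDpos [_ HDD]]] Hg Hgf.
  pose (d := gadd f (gscale (-1) g)).
  assert (Ef : f = gadd g d)
    by (apply gamble_ext; intro w; simpl; ring).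
  destruct (classic (d = gzero Om)) as [Hd|Hd].
  - replace f with g; [exact Hg|].
    apply gamble_ext; intro w; rewrite Ef, Hd; simpl; ring.
  - rewrite Ef; apply HDD; [exact Hg|apply HDpos; split; [|exact Hd]].
    intro w; specialize (Hgf w); simpl; lra.
Qed.

(* The natural extension of the assessment E: the smallest coherent set containing
   E, whenever there is one. *)
Definition natext E (x : gamble Om) : Prop :=
  gpos x \/ exists c, posi E c /\ gle c x.

Lemma natext_incl E g : E g -> natext E g.
Proof. intro Hg; right; exists g; split; [apply posi_mem; exact Hg|intro; lra]. Qed.

Lemma natext_coherent E : ~ natext E (gzero Om) -> coherentD (natext E).
Proof.
  intro Hz; split; [exact Hz|split; [intros g Hg; now left|split]].
  - intros g l [Hg|[c [Hc Hcg]]] Hl.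
    + left; apply gposE in Hg as [Hge [w Hw]]; apply gposE; split.
      * intro v; specialize (Hge v); simpl in *; apply Rmult_le_pos; lra.
      * exists w; simpl; apply Rmult_lt_0_compat; assumption.
    + right; exists (gscale l c); split; [apply posiZ; assumption|].
      intro w; simpl; apply Rmult_le_compat_l; [lra|apply Hcg].
  - intros f g [Hf|[c [Hc Hcf]]] [Hg|[d [Hd Hdg]]].
    + left; apply gposE in Hf as [Hfge [w Hw]]; apply gposE in Hg as [Hgge _].
      apply gposE; split.
      * intro v; specialize (Hfge v); specialize (Hgge v); simpl in *; lra.
      * exists w; specialize (Hgge w); simpl in *; lra.
    + right; exists d; split; [exact Hd|]; destruct Hf as [Hfge _].
      intro w; specialize (Hfge w); specialize (Hdg w); simpl in *; lra.
    + right; exists c; split; [exact Hc|]; destruct Hg as [Hgge _].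
      intro w; specialize (Hgge w); specialize (Hcf w); simpl in *; lra.
    + right; exists (gadd c d); split; [apply posiD; assumption|].
      intro w; specialize (Hcf w); specialize (Hdg w); simpl; lra.
Qed.

Lemma natext_dominated E B :
  (forall D, coherentD D -> (forall g, E g -> D g) -> meets B D) ->
  ~ (exists b, B b /\ gpos b) ->
  exists c, posi E c /\ (gle c (gzero Om) \/ exists b, B b /\ gle c b).
Proof.
  intros HEB HBpos.
  destruct (classic (natext E (gzero Om))) as [[Hz|[c [Hc Hc0]]]|Hz].
  - exfalso; exact (gpos_gzero Hz).
  - exists c; auto.
  - destruct (HEB _ (natext_coherent Hz) (@natext_incl E)) as [b [Hb [Hbpos|[c [Hc Hcb]]]]].
    + exfalso; eauto.
    + exists c; eauto.
Qed.

Lemma tuple_meets As gs D :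
  tuple_of As gs -> (forall g, In g gs -> D g) -> Forall (fun A => meets A D) As.
Proof.
  induction 1 as [|A g As gs HA _ IH]; intro HD; constructor.
  - exists g; split; [exact HA|apply HD; now left].
  - apply IH; intros; apply HD; now right.
Qed.

Lemma meets_tuple As D :
  Forall (fun A => meets A D) As -> exists gs, tuple_of As gs /\ forall g, In g gs -> D g.
Proof.
  induction 1 as [|A As [g [HA HDg]] _ [gs [Hgs HD]]].
  - exists nil; split; [constructor|intros g []].
  - exists (g :: gs); split; [constructor; assumption|].
    intros h [<-|Hh]; auto.
Qed.

Section CoherentK.
Variable K : gset Om -> Prop.
Hypothesis HK : coherentK K.

(* K_Dom sends every c to a member of B dominating it, or to 0 if there is none;
   K_0 then discards the 0. *)
Lemma coherentK_dominated A B :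
  K A -> (forall c, A c -> gle c (gzero Om) \/ exists b, B b /\ gle c b) -> K B.
Proof.
  destruct HK as [_ [HK0 [_ [HKsup [HKdom _]]]]]; intros HA HAB.
  assert (Hdom : forall c, exists b,
             (B b /\ gle c b) \/ (~ (exists b, B b /\ gle c b) /\ b = gzero Om)).
  { intro c; destruct (classic (exists b, B b /\ gle c b)) as [[b Hb]|Hnb];
      [exists b|exists (gzero Om)]; auto. }
  destruct (choice _ Hdom) as [dom Hdom_spec].
  assert (Himg : K (fun h => exists c, A c /\ h = dom c)).
  { apply HKdom; [exact HA|intros c Hc].
    destruct (Hdom_spec c) as [[_ Hle]|[Hnb ->]]; [exact Hle|].
    destruct (HAB c Hc) as [Hle|Hb]; [exact Hle|contradiction]. }
  apply (HKsup _ _ (HK0 _ Himg)); intros h [[c [_ ->]] Hne].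
  destruct (Hdom_spec c) as [[Hb _]|[_ Hzero]]; [exact Hb|contradiction].
Qed.

Lemma coherentK_implied (Bs : list (gset Om)) B :
  Forall K Bs ->
  (forall D, coherentD D -> Forall (fun A => meets A D) Bs -> meets B D) -> K B.
Proof.
  intros HBs HBsB; destruct HK as [_ [_ [HKpos [HKsup [_ HKadd]]]]].
  destruct (classic (exists b, B b /\ gpos b)) as [[b [Hb Hbpos]]|HBpos].
  { apply (HKsup (fun h => h = b)); [apply HKpos; exact Hbpos|now intros g ->]. }
  assert (Hsel : forall gs, exists c, tuple_of Bs gs ->
             posi (fun h => In h gs) c /\ (gle c (gzero Om) \/ exists b, B b /\ gle c b)).
  { intro gs; destruct (classic (tuple_of Bs gs)) as [Hgs|Hgs];
      [|exists (gzero Om); contradiction].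
    destruct (natext_dominated (fun h => In h gs) (B := B)) as [c Hc];
      [|exact HBpos|exists c; auto].
    intros D HD HgsD; apply HBsB; [exact HD|exact (tuple_meets D Hgs HgsD)]. }
  destruct (choice _ Hsel) as [sel Hsel_spec].
  apply coherentK_dominated
    with (A := fun h => exists gs, tuple_of Bs gs /\ h = sel gs).
  - apply HKadd; [exact HBs|intros gs Hgs; apply Hsel_spec, Hgs].
  - intros c [gs [Hgs ->]]; apply Hsel_spec, Hgs.
Qed.

Definition implied_filter (DD : gset Om -> Prop) : Prop :=
  (forall D, DD D -> coherentD D) /\
  exists Bs, Forall K Bs /\
    forall D, coherentD D -> Forall (fun A => meets A D) Bs -> DD D.

Lemma implied_filter_proper : proper_filter implied_filter.
Proof.
  split; [|split; [|split; [|split]]].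
  - intros DD [HDD _]; exact HDD.
  - exists (@coherentD Om); split; [auto|exists nil; split; auto].
  - intros [_ [Bs [HBs HBsD]]]; destruct HK as [HKemp _]; apply HKemp.
    apply (coherentK_implied HBs); intros D HD HBsD'; destruct (HBsD D HD HBsD').
  - intros DD1 DD2 [HDD1 [Bs1 [HBs1 H1]]] [_ [Bs2 [HBs2 H2]]]; split.
    + intros D [HD _]; auto.
    + exists (Bs1 ++ Bs2); split; [apply Forall_app; auto|].
      intros D HD HBsD; apply Forall_app in HBsD as [HB1 HB2]; auto.
  - intros DD1 DD2 [_ [Bs [HBs H1]]] H12 HDD2; split; [exact HDD2|].
    exists Bs; auto.
Qed.

Lemma filter_rep_implied_filter B : K B <-> filter_rep implied_filter B.
Proof.
  split.
  - intro HB; exists (meeting_set B); split; [split|].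
    + intros D [HD _]; exact HD.
    + exists (B :: nil); split; [auto|].
      intros D HD HBD; inversion HBD; split; assumption.
    + intros D [_ HBD]; exact HBD.
  - intros [DD [[_ [Bs [HBs HBsD]]] HDDB]].
    apply (coherentK_implied HBs); intros D HD HBsD'; exact (HDDB D (HBsD D HD HBsD')).
Qed.

End CoherentK.

Section ProperFilter.
Variable F : (gset Om -> Prop) -> Prop.
Hypothesis HF : proper_filter F.

Lemma filter_rep_Forall As :
  Forall (filter_rep F) As ->
  exists DD, F DD /\ forall D, DD D -> Forall (fun A => meets A D) As.
Proof.
  destruct HF as [_ [[DD0 HDD0] [_ [HFcap _]]]].
  induction 1 as [|A As [DD1 [HDD1 H1]] _ [DD2 [HDD2 H2]]].
  - exists DD0; split; [exact HDD0|constructor].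
  - exists (fun D => DD1 D /\ DD2 D); split; [exact (HFcap _ _ HDD1 HDD2)|].
    intros D [HD1 HD2]; constructor; [exact (H1 D HD1)|exact (H2 D HD2)].
Qed.

Lemma filter_rep_coherentK : coherentK (filter_rep F).
Proof.
  pose proof HF as [HFcoh [[DD0 HDD0] [HFemp [_ HFup]]]].
  split; [|split; [|split; [|split; [|split]]]].
  - intros [DD [HDD Hempty]]; apply HFemp.
    apply (HFup DD); [exact HDD| |intros D []].
    intros D HD; now destruct (Hempty D HD) as [g [[] _]].
  - intros A [DD [HDD HA]]; exists DD; split; [exact HDD|].
    intros D HD; destruct (HA D HD) as [g [Hg HDg]]; exists g; split; [|exact HDg].
    split; [exact Hg|intros ->; exact (proj1 (HFcoh DD HDD D HD) HDg)].
  - intros g Hg; exists DD0; split; [exact HDD0|].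
    intros D HD; exists g; split; [reflexivity|exact (proj1 (proj2 (HFcoh _ HDD0 D HD)) g Hg)].
  - intros A B [DD [HDD HA]] HAB; exists DD; split; [exact HDD|].
    intros D HD; destruct (HA D HD) as [g [Hg HDg]]; exists g; auto.
  - intros A f [DD [HDD HA]] Hf; exists DD; split; [exact HDD|].
    intros D HD; destruct (HA D HD) as [g [Hg HDg]]; exists (f g); split; [eauto|].
    exact (coherentD_le (HFcoh DD HDD D HD) HDg (Hf g Hg)).
  - intros As sel HAs Hsel.
    destruct (filter_rep_Forall HAs) as [DD [HDD HAsD]]; exists DD; split; [exact HDD|].
    intros D HD; destruct (meets_tuple (HAsD D HD)) as [gs [Hgs HgsD]].
    exists (sel gs); split; [eauto|].
    exact (coherentD_posi (HFcoh DD HDD D HD) HgsD (Hsel gs Hgs)).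
Qed.

Lemma filter_rep_meeting_set B : filter_rep F B <-> F (meeting_set B).
Proof.
  destruct HF as [HFcoh [_ [_ [_ HFup]]]]; split.
  - intros [DD [HDD HDDB]]; apply (HFup DD); [exact HDD| |intros D [HD _]; exact HD].
    intro D; split; [exact (HFcoh DD HDD D H)|exact (HDDB D H)].
  - intro HB; exists (meeting_set B); split; [exact HB|intros D [_ HBD]; exact HBD].
Qed.

End ProperFilter.

End Gambles.

Theorem mainTheorem11 (Omega : Type) (HOmega : inhabited Omega)
  (K : gset Omega -> Prop) :
  (coherentK K <->
     exists F : (gset Omega -> Prop) -> Prop,
       proper_filter F /\ forall B : gset Omega, K B <-> filter_rep F B) /\
  (forall F : (gset Omega -> Prop) -> Prop,
     proper_filter F -> (forall B : gset Omega, K B <-> filter_rep F B) ->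
     forall B : gset Omega,
       filter_rep F B <-> F (fun D => coherentD D /\ exists g, B g /\ D g)).
Proof.
  split; [split|].
  - intro HK; exists (implied_filter K); split.
    + exact (implied_filter_proper HK).
    + exact (filter_rep_implied_filter HK).
  - intros [F [HF HKF]].
    replace K with (filter_rep F)
      by (extensionality B; apply propositional_extensionality; symmetry; apply HKF).
    exact (filter_rep_coherentK HF).
  - intros F HF _ B; exact (filter_rep_meeting_set HF B).
Qed.
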